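(* Let $T$ be a set of states and $\varphi=\mathrm{Safety}(T)$. There exists an infinitely branching (countable) MDP $\mathcal M$ with initial state $s$ such that (i) for every FR-strategy $\sigma$ we have $\mathcal P_{\mathcal M,s,\sigma}(\varphi)=0$, and (ii) for every $c\in[0,1)$ there exists an HD-strategy $\sigma$ such that $\mathcal P_{\mathcal M,s,\sigma}(\varphi)\ge c$. Hence $\epsilon$-optimal strategies for safety require infinite memory (i.e., cannot in general be chosen FR).
   Context: An MDP is $\mathcal M=\langle S,S_\Box,S_\circ,\longrightarrow,P\rangle$ where $S$ is a countable set of states partitioned into player states $S_\Box$ and random states $S_\circ$, $\longrightarrow\subseteq S\times S$ is a transition relation in which every state has at least one successor, and $P$ assigns to each random state a probability distribution over its successors. $\mathcal M$ is finitely branching if every state has finitely many successors, otherwise infinitely branching. A play is an infinite sequence $s_0s_1\cdots$ with $s_i\longrightarrow s_{i+1}$ for all $i$. A strategy is a function $\sigma:S^*S_\Box\to\mathcal D(S)$ assigning to each partial play ending in a player state $s$ a probability distribution over successors of $s$. Strategies are implemented by probabilistic transducers $(\mathsf M,\mathsf m_0,\pi_u,\pi_s)$ with countable memory $\mathsf M$, initial mode $\mathsf m_0$, randomized memory update $\pi_u:\mathsf M\times S\to\mathcal D(\mathsf M)$ and randomized successor choice $\pi_s:\mathsf M\times S_\Box\to\mathcal D(S)$ (choosing only successors of the current state); the induced strategy is $\sigma(s_0\cdots s_n)=\pi_s(s_n,\pi_u(s_0\cdots s_{n-1},\mathsf m_0))$ with $\pi_u$ extended naturally. A strategy is finite-memory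 (F) if some transducer with finite $\mathsf M$ induces it, deterministic (D) if $\pi_u,\pi_s$ can be taken Dirac; FR = finite-memory randomized, HD = history-dependent deterministic. $\mathcal P_{\mathcal M,s,\sigma}$ is the induced probability measure on plays from $s$. The safety objective $\mathrm{Safety}(T)$ is the set of plays that never visit a state in $T$. The value of $s$ is $\sup_\sigma\mathcal P_{\mathcal M,s,\sigma}(\varphi)$; $\sigma$ is $\epsilon$-optimal from $s$ if it achieves at least the value minus $\epsilon$. *)

From Stdlib Require Import Reals List.
From Coquelicot Require Import Coquelicot.
Import ListNotations.
Open Scope R_scope.

(* States (and memory modes) are encoded as natural numbers: every countable
   state space embeds into nat. *)

Definition distr (d : nat -> R) : Prop :=
  (forall n, 0 <= d n) /\ is_series d 1.

Definition dirac (a : nat) : nat -> R := fun n => if Nat.eqb n a then 1 else 0.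

Fixpoint fsum (k : nat) (f : nat -> R) : R :=
  match k with O => 0 | S k' => fsum k' f + f k' end.

(** MDPs with countable state space nat.  [player s = true] iff s is a player
    state (S_Box); otherwise s is a random state (S_circ). *)
Record MDP := {
  player : nat -> bool;
  edge : nat -> nat -> Prop;
  prob : nat -> nat -> R;                      (* P(s)(t) for random s *)
  edge_total : forall s, exists t, edge s t;
  prob_distr : forall s, player s = false -> distr (prob s);
  prob_succ : forall s t, player s = false -> prob s t <> 0 -> edge s t
}.

Definition finitely_branching (M : MDP) : Prop :=
  forall s, exists N, forall t, edge M s t -> (t < N)%nat.

Definition infinitely_branching (M : MDP) : Prop := ~ finitely_branching M.

(** A strategy maps a (nonempty) partial play s0...sn, given as a list in
    chronological order, to a distribution over successors of sn. *)
Definition strategy := list nat -> nat -> R.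

Definition cur (h : list nat) : nat := last h 0%nat.

Record transducer := {
  m_init : nat;
  pi_u : nat -> nat -> nat -> R;   (* pi_u m s m' : memory update *)
  pi_s : nat -> nat -> nat -> R    (* pi_s m s t  : successor choice *)
}.

Definition FR_transducer (M : MDP) (k : nat) (tr : transducer) : Prop :=
  (m_init tr < k)%nat /\
  (forall m s, (m < k)%nat ->
      distr (pi_u tr m s) /\ forall m', pi_u tr m s m' <> 0 -> (m' < k)%nat) /\
  (forall m s, (m < k)%nat -> player M s = true ->
      distr (pi_s tr m s) /\ forall t, pi_s tr m s t <> 0 -> edge M s t).

Definition mem_after (k : nat) (tr : transducer) (l : list nat) : nat -> R :=
  fold_left (fun mu s => fun m' => fsum k (fun m => mu m * pi_u tr m s m'))
            l (dirac (m_init tr)).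

(** sigma(s0...sn) = pi_s(sn, pi_u(s0...s_{n-1}, m0)). *)
Definition FR_strategy (k : nat) (tr : transducer) : strategy :=
  fun h t => fsum k (fun m => mem_after k tr (removelast h) m * pi_s tr m (cur h) t).

(** Deterministic transducers (Dirac pi_u, pi_s) with countable memory nat. *)
Record dtransducer := {
  d_init : nat;
  d_upd : nat -> nat -> nat;
  d_choose : nat -> nat -> nat
}.

Definition HD_transducer (M : MDP) (tr : dtransducer) : Prop :=
  forall m s, player M s = true -> edge M s (d_choose tr m s).

Definition HD_strategy (tr : dtransducer) : strategy :=
  fun h => dirac (d_choose tr (fold_left (d_upd tr) (removelast h) (d_init tr)) (cur h)).

Definition step (M : MDP) (sigma : strategy) (h : list nat) (t : nat) : R :=
  if player M (cur h) then sigma h t else prob M (cur h) t.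

Fixpoint avoid (M : MDP) (sigma : strategy) (T : nat -> bool) (n : nat)
         (h : list nat) : R :=
  if T (cur h) then 0 else
  match n with
  | O => 1
  | S n' => Series (fun t => step M sigma h t * avoid M sigma T n' (h ++ [t]))
  end.

(** P_{M,s,sigma}(Safety(T)) as the limit of the measures of the decreasing
    cylinder events "no T-state among s0..sn" (continuity from above). *)
Definition Psafe (M : MDP) (sigma : strategy) (T : nat -> bool) (s : nat) : R :=
  real (Lim_seq (fun n => avoid M sigma T n [s])).

(** The gadget: from the choice state 0 the player picks a gamble [t >= 2],
    which falls into the losing sink 1 with probability [2^-t] and otherwise
    returns to 0.  A strategy with [k] memory modes picks the gamble from a
    mixture of [k] fixed distributions, each of which loses with some
    positive probability [r_m]; so every round loses at least [min r_m > 0]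
    and the play is lost almost surely.  A counter, in contrast, can pick the
    gambles [N+2, N+3, ...], whose total losing probability is at most
    [2^-N]. *)

From Stdlib Require Import Reals List Lia Lra Classical.
From Coquelicot Require Import Coquelicot.
Import ListNotations.
Open Scope R_scope.

(** * Finite sums and series *)

Lemma fsum_ext k f g : (forall m, (m < k)%nat -> f m = g m) -> fsum k f = fsum k g.
Proof. induction k; simpl; intros H; [reflexivity|]. rewrite IHk, H; auto. Qed.

Lemma fsum_zero k : fsum k (fun _ => 0) = 0.
Proof. induction k; simpl; lra. Qed.

Lemma fsum_plus k f g : fsum k (fun m => f m + g m) = fsum k f + fsum k g.
Proof. induction k; simpl; [lra|]. rewrite IHk. lra. Qed.

Lemma fsum_scal k c f : fsum k (fun m => c * f m) = c * fsum k f.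
Proof. induction k; simpl; [lra|]. rewrite IHk. lra. Qed.

Lemma fsum_swap k j (F : nat -> nat -> R) :
  fsum k (fun a => fsum j (F a)) = fsum j (fun b => fsum k (fun a => F a b)).
Proof.
  induction k; simpl.
  - symmetry. apply fsum_zero.
  - rewrite IHk, <- fsum_plus. reflexivity.
Qed.

Lemma fsum_nonneg k f : (forall m, (m < k)%nat -> 0 <= f m) -> 0 <= fsum k f.
Proof.
  induction k; simpl; intros H; [lra|].
  assert (0 <= f k) by auto. assert (0 <= fsum k f) by auto. lra.
Qed.

Lemma fsum_le k f g : (forall m, (m < k)%nat -> f m <= g m) -> fsum k f <= fsum k g.
Proof.
  induction k; simpl; intros H; [lra|].
  assert (f k <= g k) by auto. assert (fsum k f <= fsum k g) by auto. lra.
Qed.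

Lemma sum_n_fsum f n : sum_n f n = fsum (S n) f.
Proof.
  induction n.
  - rewrite sum_O. simpl. lra.
  - rewrite sum_Sn, IHn. reflexivity.
Qed.

Lemma fsum_support f K : (forall u, (K <= u)%nat -> f u = 0) ->
  forall n, (K <= n)%nat -> fsum n f = fsum K f.
Proof.
  intros Hf n Hn. induction Hn; [reflexivity|].
  simpl. rewrite IHHn, (Hf m) by lia. lra.
Qed.

Lemma is_series_support f K : (forall u, (K <= u)%nat -> f u = 0) ->
  is_series f (fsum K f).
Proof.
  intros Hf. enough (Hlim : is_lim_seq (sum_n f) (fsum K f)) by exact Hlim.
  apply is_lim_seq_ext_loc with (fun _ => fsum K f).
  - exists K. intros n Hn. rewrite sum_n_fsum. symmetry. apply fsum_support; auto.
  - apply is_lim_seq_const.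
Qed.

Lemma Series_support f K : (forall u, (K <= u)%nat -> f u = 0) -> Series f = fsum K f.
Proof. intros Hf. apply is_series_unique, is_series_support, Hf. Qed.

Lemma Series_single f a : (forall u, u <> a -> f u = 0) -> Series f = f a.
Proof.
  intros Hf. rewrite (Series_support f (S a)) by (intros u Hu; apply Hf; lia).
  simpl. rewrite (fsum_ext a f (fun _ => 0)), fsum_zero by (intros m Hm; apply Hf; lia).
  lra.
Qed.

Lemma Series_nonneg f : (forall n, 0 <= f n) -> 0 <= Series f.
Proof.
  intros Hf.
  assert (Hle : Rbar_le (Lim_seq (fun _ => 0)) (Lim_seq (sum_n f))).
  { apply Lim_seq_le_loc. exists O. intros n _. rewrite sum_n_fsum.
    apply fsum_nonneg. auto. }
  rewrite Lim_seq_const in Hle. unfold Series.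
  destruct (Lim_seq (sum_n f)); simpl in *; lra.
Qed.

Lemma Series_ge_term f t : (forall n, 0 <= f n) -> ex_series f -> f t <= Series f.
Proof.
  intros Hf Hex.
  set (g u := if Nat.eqb u t then f t else 0).
  replace (f t) with (Series g).
  2: { rewrite (Series_single g t); unfold g; [now rewrite Nat.eqb_refl|].
       intros u Hu. apply Nat.eqb_neq in Hu. now rewrite Hu. }
  apply Series_le; auto. unfold g.
  intros n. destruct (Nat.eqb_spec n t); subst; split; auto; lra.
Qed.

Lemma is_series_Rmult_l c a l : is_series a l -> is_series (fun n => c * a n) (c * l).
Proof. exact (is_series_scal_l c a l). Qed.

Lemma is_series_fsum k (F : nat -> nat -> R) (l : nat -> R) :
  (forall m, (m < k)%nat -> is_series (F m) (l m)) ->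
  is_series (fun t => fsum k (fun m => F m t)) (fsum k l).
Proof.
  induction k; simpl; intros H.
  - exact (is_series_support (fun _ => 0) 0 (fun _ _ => eq_refl)).
  - apply (is_series_plus _ _ _ _ (IHk (fun m Hm => H m ltac:(lia))) (H k ltac:(lia))).
Qed.

Lemma Lim_seq_lower_bound u a b : (forall n, a <= u n <= b) -> a <= real (Lim_seq u).
Proof.
  intros H.
  assert (Ha : Rbar_le (Lim_seq (fun _ => a)) (Lim_seq u))
    by (apply Lim_seq_le_loc; exists O; intros n _; apply H).
  assert (Hb : Rbar_le (Lim_seq u) (Lim_seq (fun _ => b)))
    by (apply Lim_seq_le_loc; exists O; intros n _; apply H).
  rewrite Lim_seq_const in Ha, Hb.
  destruct (Lim_seq u); simpl in *; tauto.
Qed.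

Lemma is_lim_seq_div2 u l : is_lim_seq u l -> is_lim_seq (fun n => u (Nat.div2 n)) l.
Proof.
  apply is_lim_seq_subseq.
  intros P [N HN]. exists (2 * N)%nat. intros n Hn.
  apply HN, Nat.div2_le_lower_bound. exact Hn.
Qed.

Lemma finite_family_pos_lb k f : (forall m, (m < k)%nat -> 0 < f m) ->
  exists r, 0 < r <= 1 /\ forall m, (m < k)%nat -> r <= f m.
Proof.
  induction k as [|j IH]; intros Hf.
  - exists 1. split; [lra | intros; lia].
  - destruct IH as [r [Hr Hle]]; [intros; apply Hf; lia|].
    assert (Hj : 0 < f j) by (apply Hf; lia).
    exists (Rmin r (f j)).
    pose proof (Rmin_l r (f j)). pose proof (Rmin_r r (f j)).
    split; [split; [apply Rmin_glb_lt|]; lra|].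
    intros m Hm. destruct (Nat.eq_dec m j) as [->|Hmj]; [lra|].
    pose proof (Hle m ltac:(lia)). lra.
Qed.

Lemma cur_snoc h t : cur (h ++ [t]) = t.
Proof. apply last_last. Qed.

Lemma avoid_S M sigma T n h :
  avoid M sigma T (S n) h =
  if T (cur h) then 0
  else Series (fun t => step M sigma h t * avoid M sigma T n (h ++ [t])).
Proof. reflexivity. Qed.

(** * The gamble MDP *)

Definition loss (t : nat) : R := (1/2)^t.

Lemma loss_bounds t : 0 < loss t <= 1.
Proof.
  unfold loss. split; [apply pow_lt; lra|].
  apply Rle_trans with (1 ^ t); [apply pow_incr; lra | rewrite pow1; lra].
Qed.

Lemma loss_S t : loss (S t) = loss t / 2.
Proof. unfold loss. simpl. lra. Qed.

Lemma loss_antimono a b : (a <= b)%nat -> loss b <= loss a.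
Proof. induction 1; [lra|]. rewrite loss_S. pose proof (loss_bounds m). lra. Qed.

Definition gamble_player (s : nat) : bool := Nat.eqb s 0.

Definition gamble_edge (s t : nat) : Prop :=
  match s with
  | 0 => (2 <= t)%nat
  | 1 => t = 1%nat
  | _ => t = 0%nat \/ t = 1%nat
  end.

Definition gamble_prob (s t : nat) : R :=
  match s with
  | 0 => 0
  | 1 => dirac 1 t
  | _ => match t with 0 => 1 - loss s | 1 => loss s | _ => 0 end
  end.

Lemma gamble_edge_total s : exists t, gamble_edge s t.
Proof. destruct s as [|[|s]]; simpl; [exists 2%nat; lia | exists 1%nat | exists 0%nat]; auto. Qed.

Lemma gamble_prob_distr s : gamble_player s = false -> distr (gamble_prob s).
Proof.
  destruct s as [|[|s]]; intros H; try discriminate; split.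
  - intros n. simpl. unfold dirac. destruct (Nat.eqb n 1); lra.
  - change (is_series (dirac 1) 1).
    replace 1 with (fsum 2 (dirac 1)) by (simpl; unfold dirac; simpl; lra).
    apply is_series_support. intros u Hu. unfold dirac.
    destruct (Nat.eqb_spec u 1); [lia | reflexivity].
  - intros [|[|n]]; pose proof (loss_bounds (S (S s))); simpl; lra.
  - replace 1 with (fsum 2 (gamble_prob (S (S s)))) by (simpl; lra).
    apply is_series_support. intros [|[|u]] Hu; [lia | lia | reflexivity].
Qed.

Lemma gamble_prob_succ s t :
  gamble_player s = false -> gamble_prob s t <> 0 -> gamble_edge s t.
Proof.
  destruct s as [|[|s]]; simpl; intros H1 H2; try discriminate.
  - unfold dirac in H2. destruct (Nat.eqb_spec t 1); [assumption | lra].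
  - destruct t as [|[|t]]; auto. lra.
Qed.

Definition gamble_mdp : MDP := {|
  player := gamble_player; edge := gamble_edge; prob := gamble_prob;
  edge_total := gamble_edge_total; prob_distr := gamble_prob_distr;
  prob_succ := gamble_prob_succ |}.

Definition target (t : nat) : bool := Nat.eqb t 1.

Lemma gamble_mdp_infinitely_branching : infinitely_branching gamble_mdp.
Proof.
  intros Hfin. destruct (Hfin 0%nat) as [N HN].
  assert (N + 2 < N)%nat by (apply HN; simpl; lia). lia.
Qed.

Lemma avoid_target sigma n h : cur h = 1%nat -> avoid gamble_mdp sigma target n h = 0.
Proof. intros H. destruct n; simpl; rewrite H; reflexivity. Qed.

Lemma avoid_gamble sigma n h t : (2 <= t)%nat ->
  avoid gamble_mdp sigma target (S n) (h ++ [t]) =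
  (1 - loss t) * avoid gamble_mdp sigma target n ((h ++ [t]) ++ [0%nat]).
Proof.
  intros Ht. rewrite avoid_S, cur_snoc.
  destruct t as [|[|t]]; try lia. simpl target. cbv iota.
  unfold step. rewrite cur_snoc. simpl player.
  rewrite (Series_support _ 2) by (intros [|[|u]] Hu; [lia | lia | simpl; lra]).
  simpl. rewrite (avoid_target _ _ ((h ++ [S (S t)]) ++ [1%nat])) by apply cur_snoc.
  lra.
Qed.

(** * A counter achieves any safety probability below 1 *)

Definition counter (N : nat) : dtransducer := {|
  d_init := 0; d_upd := fun m _ => S m; d_choose := fun m _ => (m + N + 2)%nat |}.

Lemma counter_HD N : HD_transducer gamble_mdp (counter N).
Proof.
  intros m s Hs. simpl in *. apply Nat.eqb_eq in Hs. subst. simpl. lia.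
Qed.

Lemma fold_left_succ (l : list nat) m : fold_left (fun m (_ : nat) => S m) l m = (m + length l)%nat.
Proof. revert m. induction l as [|a l IH]; simpl; intros m; [lia|]. rewrite IH. lia. Qed.

Lemma length_removelast_le (h : list nat) : (length (removelast h) <= length h)%nat.
Proof. rewrite removelast_firstn_len, length_firstn. lia. Qed.

Lemma avoid_counter_choice N n h : cur h = 0%nat ->
  avoid gamble_mdp (HD_strategy (counter N)) target (S n) h =
  avoid gamble_mdp (HD_strategy (counter N)) target n
        (h ++ [(length (removelast h) + N + 2)%nat]).
Proof.
  intros Hc. rewrite avoid_S, Hc. simpl target. cbv iota.
  unfold step, HD_strategy, dirac. rewrite Hc. simpl. rewrite fold_left_succ. simpl.
  rewrite (Series_single _ (length (removelast h) + N + 2)).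
  - rewrite Nat.eqb_refl. lra.
  - intros u Hu. apply Nat.eqb_neq in Hu. rewrite Hu. lra.
Qed.

Definition counter_bound (N n : nat) (h : list nat) : Prop :=
  1 - loss (length (removelast h) + N + 1)
    <= avoid gamble_mdp (HD_strategy (counter N)) target n h <= 1.

(* (1 - x/2)^2 >= 1 - x: the next gamble loses with probability x/2, all later
   ones together with probability at most x/2. *)
Lemma counter_bound_at_choice N n : forall h, cur h = 0%nat ->
  counter_bound N n h /\ counter_bound N (S n) h.
Proof.
  induction n as [|n IH]; intros h Hc; unfold counter_bound.
  - pose proof (loss_bounds (length (removelast h) + N + 1)).
    rewrite avoid_counter_choice by exact Hc. simpl. rewrite Hc, cur_snoc.
    change (target 0) with false.
    replace (target (length (removelast h) + N + 2)) with false
      by (symmetry; apply Nat.eqb_neq; lia).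
    lra.
  - split; [apply (IH h Hc)|].
    rewrite avoid_counter_choice, avoid_gamble by (exact Hc || lia).
    set (c := length (removelast h)).
    set (h' := (h ++ [(c + N + 2)%nat]) ++ [0%nat]).
    destruct (IH h' (cur_snoc _ _)) as [[Hlo Hhi] _].
    assert (Hlen : length (removelast h') = S (length h)).
    { unfold h'. rewrite removelast_last, length_app. simpl. lia. }
    pose proof (length_removelast_le h).
    assert (Hmono : loss (length (removelast h') + N + 1) <= loss (c + N + 2))
      by (apply loss_antimono; unfold c; lia).
    assert (Hhalf : loss (c + N + 2) = loss (c + N + 1) / 2)
      by (rewrite <- loss_S; f_equal; lia).
    pose proof (loss_bounds (c + N + 1)).
    rewrite Hhalf in *. split; nra.
Qed.

Lemma Psafe_counter c : 0 <= c < 1 ->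
  exists tr, HD_transducer gamble_mdp tr /\ c <= Psafe gamble_mdp (HD_strategy tr) target 0.
Proof.
  intros Hc.
  destruct (pow_lt_1_zero (1/2) ltac:(rewrite Rabs_pos_eq; lra) (1 - c) ltac:(lra))
    as [N HN].
  specialize (HN N (le_n N)). rewrite Rabs_pos_eq in HN by (apply pow_le; lra).
  change ((1/2)^N) with (loss N) in HN.
  exists (counter N). split; [apply counter_HD|].
  assert (loss (N + 1) <= loss N) by (apply loss_antimono; lia).
  apply Rle_trans with (1 - loss (N + 1)); [lra|].
  apply Lim_seq_lower_bound with 1. intros n.
  apply (counter_bound_at_choice N n [0%nat] eq_refl).
Qed.

(** * Finite memory loses almost surely *)

Section FiniteMemory.

Variables (k : nat) (tr : transducer).
Hypothesis Htr : FR_transducer gamble_mdp k tr.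

Definition mode_distr (mu : nat -> R) : Prop :=
  (forall m, (m < k)%nat -> 0 <= mu m) /\ fsum k mu = 1.

Lemma fsum_pi_u m s : (m < k)%nat -> fsum k (pi_u tr m s) = 1.
Proof.
  intros Hm. destruct Htr as [_ [Hu _]]. destruct (Hu m s Hm) as [[_ Hser] Hsupp].
  rewrite <- (is_series_unique _ _ Hser). symmetry. apply Series_support.
  intros u Hku. destruct (Req_dec (pi_u tr m s u) 0) as [|Hne]; [assumption|].
  apply Hsupp in Hne. lia.
Qed.

Lemma mode_distr_update mu s : mode_distr mu ->
  mode_distr (fun m' => fsum k (fun m => mu m * pi_u tr m s m')).
Proof.
  intros [Hnn Hsum]. split.
  - intros m' _. apply fsum_nonneg. intros m Hm. destruct Htr as [_ [Hu _]].
    destruct (Hu m s Hm) as [[Hpi _] _]. apply Rmult_le_pos; auto.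
  - rewrite fsum_swap, <- Hsum. apply fsum_ext. intros m Hm.
    rewrite fsum_scal, fsum_pi_u by exact Hm. lra.
Qed.

Lemma mode_distr_mem_after l : mode_distr (mem_after k tr l).
Proof.
  unfold mem_after.
  assert (Hinit : mode_distr (dirac (m_init tr))).
  { destruct Htr as [Hi _]. split.
    - intros m _. unfold dirac. destruct (Nat.eqb m (m_init tr)); lra.
    - rewrite <- (Series_support (dirac (m_init tr)) k).
      + rewrite (Series_single _ (m_init tr)).
        * unfold dirac. rewrite Nat.eqb_refl. reflexivity.
        * intros u Hu. unfold dirac. apply Nat.eqb_neq in Hu. rewrite Hu. reflexivity.
      + intros u Hu. unfold dirac. destruct (Nat.eqb_spec u (m_init tr)); [lia | reflexivity]. }
  revert Hinit. generalize (dirac (m_init tr)).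
  induction l as [|s l IH]; simpl; intros mu Hmu; [exact Hmu|].
  apply IH, mode_distr_update, Hmu.
Qed.

Lemma pi_s_choice_distr m : (m < k)%nat -> distr (pi_s tr m 0).
Proof. intros Hm. destruct Htr as [_ [_ Hs]]. apply (Hs m 0%nat Hm eq_refl). Qed.

Lemma pi_s_choice_gamble m t : (m < k)%nat -> (t < 2)%nat -> pi_s tr m 0 t = 0.
Proof.
  intros Hm Ht. destruct Htr as [_ [_ Hs]]. destruct (Hs m 0%nat Hm eq_refl) as [_ Hedge].
  destruct (Req_dec (pi_s tr m 0 t) 0) as [|Hne]; [assumption|].
  apply Hedge in Hne. simpl in Hne. lia.
Qed.

Definition choice (mu : nat -> R) (t : nat) : R := fsum k (fun m => mu m * pi_s tr m 0 t).

Lemma choice_nonneg mu t : mode_distr mu -> 0 <= choice mu t.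
Proof.
  intros [Hmu _]. apply fsum_nonneg. intros m Hm.
  apply Rmult_le_pos; [auto | apply (pi_s_choice_distr m Hm)].
Qed.

Lemma choice_gamble mu t : (t < 2)%nat -> choice mu t = 0.
Proof.
  intros Ht. unfold choice. rewrite <- (fsum_zero k). apply fsum_ext.
  intros m Hm. rewrite pi_s_choice_gamble by assumption. lra.
Qed.

Lemma is_series_choice mu : mode_distr mu -> is_series (choice mu) 1.
Proof.
  intros [_ Hsum]. rewrite <- Hsum.
  replace (fsum k mu) with (fsum k (fun m => mu m * 1)) by (apply fsum_ext; intros; lra).
  apply is_series_fsum. intros m Hm.
  apply is_series_Rmult_l, (pi_s_choice_distr m Hm).
Qed.

Definition mode_loss (m : nat) : R := Series (fun t => pi_s tr m 0 t * loss t).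

Lemma is_series_mode_loss m : (m < k)%nat ->
  is_series (fun t => pi_s tr m 0 t * loss t) (mode_loss m).
Proof.
  intros Hm. destruct (pi_s_choice_distr m Hm) as [Hnn Hser].
  apply Series_correct, (@ex_series_le R_AbsRing R_CompleteNormedModule) with (pi_s tr m 0).
  - intros t. change (norm _) with (Rabs (pi_s tr m 0 t * loss t)).
    pose proof (Hnn t). pose proof (loss_bounds t).
    rewrite Rabs_pos_eq by nra. nra.
  - exists 1. exact Hser.
Qed.

Lemma mode_loss_pos m : (m < k)%nat -> 0 < mode_loss m.
Proof.
  intros Hm. destruct (pi_s_choice_distr m Hm) as [Hnn Hser].
  destruct (classic (exists t, 0 < pi_s tr m 0 t)) as [[t Ht]|Hnone].
  - apply Rlt_le_trans with (pi_s tr m 0 t * loss t).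
    + pose proof (loss_bounds t). nra.
    + apply (Series_ge_term (fun t => pi_s tr m 0 t * loss t));
        [| eexists; apply is_series_mode_loss, Hm].
      intros n. pose proof (Hnn n). pose proof (loss_bounds n). nra.
  - exfalso. apply is_series_unique in Hser.
    rewrite (Series_support _ 0) in Hser; [simpl in Hser; lra|].
    intros u _. pose proof (Hnn u).
    destruct (Rle_lt_dec (pi_s tr m 0 u) 0); [lra|]. exfalso. eauto.
Qed.

Lemma is_series_choice_loss mu :
  is_series (fun t => choice mu t * loss t) (fsum k (fun m => mu m * mode_loss m)).
Proof.
  apply is_series_ext with (fun t => fsum k (fun m => mu m * (pi_s tr m 0 t * loss t))).
  - intros t. unfold choice. rewrite Rmult_comm, <- fsum_scal.
    apply fsum_ext. intros. lra.
  - apply is_series_fsum. intros m Hm. apply is_series_Rmult_l, is_series_mode_loss, Hm.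
Qed.

Lemma avoid_nonneg n : forall h, 0 <= avoid gamble_mdp (FR_strategy k tr) target n h.
Proof.
  induction n as [|n IH]; intros h; simpl; destruct (target (cur h)); try lra.
  apply Series_nonneg. intros t. apply Rmult_le_pos; [|apply IH].
  unfold step. simpl player. destruct (gamble_player (cur h)) eqn:Hpl.
  - apply fsum_nonneg. intros m Hm.
    destruct (mode_distr_mem_after (removelast h)) as [Hmu _].
    destruct Htr as [_ [_ Hs]]. destruct (Hs m (cur h) Hm Hpl) as [[Hpi _] _].
    apply Rmult_le_pos; auto.
  - apply (gamble_prob_distr _ Hpl).
Qed.

Lemma step_choice h t : cur h = 0%nat ->
  step gamble_mdp (FR_strategy k tr) h t = choice (mem_after k tr (removelast h)) t.
Proof. intros Hc. unfold step, FR_strategy. rewrite Hc. reflexivity. Qed.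

Lemma avoid_one_round h : cur h = 0%nat -> avoid gamble_mdp (FR_strategy k tr) target 1 h <= 1.
Proof.
  intros Hc. simpl. rewrite Hc. simpl target. cbv iota.
  set (mu := mem_after k tr (removelast h)).
  pose proof (mode_distr_mem_after (removelast h)) as Hmu.
  apply Rle_trans with (Series (choice mu));
    [| rewrite (is_series_unique _ _ (is_series_choice mu Hmu)); lra].
  apply Series_le; [| eexists; apply is_series_choice, Hmu].
  intros t. rewrite step_choice by exact Hc. fold mu. pose proof (choice_nonneg mu t Hmu).
  destruct (target (cur (h ++ [t]))); nra.
Qed.

Lemma expected_mode_loss_ge r mu : (forall m, (m < k)%nat -> r <= mode_loss m) ->
  mode_distr mu -> r <= fsum k (fun m => mu m * mode_loss m).
Proof.
  intros Hr [Hnn Hsum].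
  rewrite <- (Rmult_1_r r), <- Hsum, <- fsum_scal.
  apply fsum_le. intros m Hm. pose proof (Hnn m Hm). pose proof (Hr m Hm). nra.
Qed.

Lemma avoid_two_rounds r : (forall m, (m < k)%nat -> r <= mode_loss m) ->
  forall j B, 0 <= B ->
  (forall h', cur h' = 0%nat -> avoid gamble_mdp (FR_strategy k tr) target j h' <= B) ->
  forall h, cur h = 0%nat -> avoid gamble_mdp (FR_strategy k tr) target (S (S j)) h <= (1 - r) * B.
Proof.
  intros Hr j B HB Hj h Hc.
  set (mu := mem_after k tr (removelast h)).
  pose proof (mode_distr_mem_after (removelast h)) as Hmu. fold mu in Hmu.
  rewrite avoid_S, Hc. simpl target. cbv iota.
  set (L := fsum k (fun m => mu m * mode_loss m)).
  pose proof (expected_mode_loss_ge r mu Hr Hmu) as HL. fold L in HL.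
  assert (Hser : is_series (fun t => choice mu t * (1 - loss t) * B) (B * (1 - L))).
  { apply is_series_ext with (fun t => B * (choice mu t - choice mu t * loss t));
      [intros; lra|].
    apply is_series_Rmult_l.
    exact (is_series_minus _ _ _ _ (is_series_choice mu Hmu) (is_series_choice_loss mu)). }
  apply Rle_trans with (B * (1 - L)); [| nra].
  rewrite <- (is_series_unique _ _ Hser).
  apply Series_le; [| eexists; exact Hser].
  intros t. rewrite step_choice by exact Hc. fold mu.
  pose proof (choice_nonneg mu t Hmu).
  destruct (Nat.lt_ge_cases t 2) as [Ht|Ht].
  - rewrite choice_gamble by exact Ht. lra.
  - rewrite avoid_gamble by exact Ht.
    pose proof (avoid_nonneg j ((h ++ [t]) ++ [0%nat])).
    pose proof (Hj ((h ++ [t]) ++ [0%nat]) (cur_snoc _ _)).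
    pose proof (loss_bounds t).
    split; [apply Rmult_le_pos; [|apply Rmult_le_pos]; lra|].
    rewrite Rmult_assoc. apply Rmult_le_compat_l; [lra|].
    apply Rmult_le_compat_l; lra.
Qed.

Lemma avoid_geometric r : (forall m, (m < k)%nat -> r <= mode_loss m) -> r <= 1 ->
  forall n h, cur h = 0%nat ->
    avoid gamble_mdp (FR_strategy k tr) target (2 * n) h <= (1 - r) ^ n /\
    avoid gamble_mdp (FR_strategy k tr) target (S (2 * n)) h <= (1 - r) ^ n.
Proof.
  intros Hr Hr1 n. induction n as [|n IH]; intros h Hc.
  - split; [simpl; rewrite Hc; simpl; lra | apply avoid_one_round, Hc].
  - replace (2 * S n)%nat with (S (S (2 * n))) by lia. simpl pow.
    assert (0 <= (1 - r) ^ n) by (apply pow_le; lra).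
    split; apply avoid_two_rounds; auto; intros h' Hc'; apply (IH h' Hc').
Qed.

Lemma Psafe_FR_strategy : Psafe gamble_mdp (FR_strategy k tr) target 0 = 0.
Proof.
  destruct (finite_family_pos_lb k mode_loss mode_loss_pos) as [r [[Hr0 Hr1] Hr]].
  assert (Hlim : is_lim_seq (fun n => avoid gamble_mdp (FR_strategy k tr) target n [0%nat]) 0).
  { apply is_lim_seq_le_le with (fun _ => 0) (fun n => (1 - r) ^ Nat.div2 n).
    - intros n. split; [apply avoid_nonneg|].
      destruct (Nat.Even_or_Odd n) as [[m ->]|[m ->]].
      + rewrite Nat.div2_double. apply (avoid_geometric r Hr Hr1 m [0%nat] eq_refl).
      + rewrite Nat.add_1_r, Nat.div2_succ_double.
        apply (avoid_geometric r Hr Hr1 m [0%nat] eq_refl).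
    - apply is_lim_seq_const.
    - apply is_lim_seq_div2, is_lim_seq_geom. rewrite Rabs_pos_eq; lra. }
  unfold Psafe. rewrite (is_lim_seq_unique _ _ Hlim). reflexivity.
Qed.

End FiniteMemory.

Theorem theorem5 :
  exists (M : MDP) (s : nat) (T : nat -> bool),
    infinitely_branching M /\
    (forall (k : nat) (tr : transducer),
        FR_transducer M k tr -> Psafe M (FR_strategy k tr) T s = 0) /\
    (forall c : R, 0 <= c < 1 ->
        exists tr : dtransducer,
          HD_transducer M tr /\ c <= Psafe M (HD_strategy tr) T s).
Proof.
  exists gamble_mdp, 0%nat, target.
  split; [exact gamble_mdp_infinitely_branching|].
  split.
  - exact Psafe_FR_strategy.
  - exact Psafe_counter.
Qed.
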